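(* Let $J$ be an instance of TAP and let $a_1,a_2,\dots,a_n$ be an enumeration of all applicants (a master list of applicants) such that, for every school $s$, the preference list of $s$ is the restriction of the order $a_1,a_2,\dots,a_n$ to the applicants $a$ with $s\in S(a)$. Then $J$ admits exactly one stable matching, namely the matching $\mathcal M$ produced by the following procedure (Serial Dictatorship): start with $\mathcal M=\emptyset$; for $i=1,2,\dots,n$ in turn, if $S(a_i)$ contains a school $s$ such that $|\mathcal M_p(s)|<c_p(s)$ for both subjects $p\in\mathbf p(a_i)$, then add $(a_i,s)$ to $\mathcal M$ where $s$ is the most preferred such school on $a_i$'s preference list.
   Context: An instance of the Teachers Assignment Problem (TAP) consists of a finite set $A$ of applicants, a finite set $S$ of schools and a finite set $P$ of subjects. Each applicant $a\in A$ has a type $\mathbf p(a)=\{p_1(a),p_2(a)\}\subseteq P$ consisting of two distinct subjects, a set $S(a)\subseteq S$ of acceptable schools, and a strict linear order (her preference list) on $S(a)$. Each school $s$ has a partial capacity $c_p(s)\in\mathbb N$ for each subject $p\in P$, and a strict linear order (its preference list) on the set of applicants $a$ with $s\in S(a)$. An assignment $\mathcal M$ is a set of pairs $(a,s)$ with $s\in S(a)$ such that each applicant lies in at most one pair; write $\mathcal M(a)=s$ if $(a,s)\in\mathcal M$ and $\mathcal M(a)=\emptyset$ if $a$ is in no pair (unassigned). For a school $s$ and subjects $p,r$ let $\mathcal M_p(s)=\{a:(a,s)\in\mathcal M,\ p\in\mathbf p(a)\}$ and $\mathcal M_{p,r}(s)=\{a:(a,s)\in\mathcal M,\ \mathbf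 p(a)=\{p,r\}\}$. An assignment is a matching if $|\mathcal M_p(s)|\le c_p(s)$ for all $s\in S$, $p\in P$. School $s$ is undersubscribed in $p$ if $|\mathcal M_p(s)|<c_p(s)$. A pair $(a,s)$ with $s\in S(a)$ and $\mathbf p(a)=\{p_1,p_2\}$ blocks a matching $\mathcal M$ if ($a$ is unassigned or $a$ prefers $s$ to $\mathcal M(a)$) and at least one of: (i) $s$ is undersubscribed in both $p_1$ and $p_2$; (ii) for some $i\in\{1,2\}$, $s$ is undersubscribed in $p_i$ and $s$ prefers $a$ to some applicant in $\mathcal M_{p_{3-i}}(s)$; (iii) $s$ prefers $a$ to some applicant in $\mathcal M_{p_1,p_2}(s)$; (iv) $s$ prefers $a$ to two distinct applicants $a_1\in\mathcal M_{p_1}(s)$ and $a_2\in\mathcal M_{p_2}(s)$. A matching is stable if no pair blocks it. *)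

From HB Require Import structures.
From mathcomp Require Import all_boot.
Set Implicit Arguments. Unset Strict Implicit. Unset Printing Implicit Defensive.

(* An instance of the Teachers Assignment Problem.
   - type of applicant a is the two distinct subjects {sub1 a, sub2 a};
   - apl a : the preference list of a (acceptable schools S(a), most preferred first);
   - cap s p : partial capacity c_p(s);
   - spl s : preference list of school s over applicants a with s \in S(a). *)
Record TAP (Appl School Subj : finType) := MkTAP {
  sub1 : Appl -> Subj;
  sub2 : Appl -> Subj;
  apl : Appl -> seq School;
  cap : School -> Subj -> nat;
  spl : School -> seq Appl;
  sub_neq : forall a, sub1 a != sub2 a;
  apl_uniq : forall a, uniq (apl a);
  spl_uniq : forall s, uniq (spl s);
  spl_mem : forall s a, (a \in spl s) = (s \in apl a)
}.

Section TAPDefs.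
Variables (Appl School Subj : finType) (J : TAP Appl School Subj).

Definition assignment_t := {ffun Appl -> option School}.

Definition acceptable (a : Appl) (s : School) : bool := s \in apl J a.

Definition aprefers (a : Appl) (s t : School) : bool :=
  index s (apl J a) < index t (apl J a).

Definition sprefers (s : School) (a b : Appl) : bool :=
  index a (spl J s) < index b (spl J s).

Definition has_subj (a : Appl) (p : Subj) : bool :=
  (p == sub1 J a) || (p == sub2 J a).

Definition type_set (a : Appl) : {set Subj} := [set sub1 J a; sub2 J a].

Definition Mp (M : assignment_t) (s : School) (p : Subj) : {set Appl} :=
  [set b | (M b == Some s) && has_subj b p].

Definition Mtype (M : assignment_t) (s : School) (a : Appl) : {set Appl} :=
  [set b | (M b == Some s) && (type_set b == type_set a)].

Definition is_assignment (M : assignment_t) : Prop :=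
  forall a s, M a = Some s -> acceptable a s.

Definition is_matching (M : assignment_t) : Prop :=
  is_assignment M /\ forall s p, #|Mp M s p| <= cap J s p.

Definition undersub (M : assignment_t) (s : School) (p : Subj) : bool :=
  #|Mp M s p| < cap J s p.

Definition blocks (M : assignment_t) (a : Appl) (s : School) : bool :=
  let p1 := sub1 J a in let p2 := sub2 J a in
  [&& acceptable a s,
      (if M a is Some t then aprefers a s t else true) &
      [|| undersub M s p1 && undersub M s p2,
          undersub M s p1 && [exists b in Mp M s p2, sprefers s a b],
          undersub M s p2 && [exists b in Mp M s p1, sprefers s a b],
          [exists b in Mtype M s a, sprefers s a b] |
          [exists b1 in Mp M s p1, exists b2 in Mp M s p2,
             (b1 != b2) && sprefers s a b1 && sprefers s a b2]]].

Definition stable (M : assignment_t) : Prop :=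
  is_matching M /\ forall a s, ~~ blocks M a s.

Definition sd_step (M : assignment_t) (a : Appl) : assignment_t :=
  match ohead [seq s <- apl J a | undersub M s (sub1 J a) && undersub M s (sub2 J a)] with
  | Some s => [ffun b => if b == a then Some s else M b]
  | None => M
  end.

Definition serial_dictatorship (ml : seq Appl) : assignment_t :=
  foldl sd_step [ffun _ => None] ml.

End TAPDefs.

From HB Require Import structures.
From mathcomp Require Import all_boot.
Set Implicit Arguments. Unset Strict Implicit. Unset Printing Implicit Defensive.

(* Stability: at a's turn, a school s she prefers to her outcome is full, in
   one of her subjects, with applicants placed before her; they precede a on
   the master list, so s prefers them to a, and later turns never change
   that roster.
   Uniqueness, by induction along the master list: if a stable M agrees with
   Serial Dictatorship before a, any school M gives a still had room for her
   at her turn, so it is no better than her Serial Dictatorship school s; and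
   if it were worse, s could only have been filled in M by applicants after a,
   whom s likes less, so (a, s) would block M. *)

Lemma index_filter_lt (T : eqType) (P : pred T) (l : seq T) (x y : T) :
  P x -> P y -> (index x (filter P l) < index y (filter P l)) = (index x l < index y l).
Proof.
move=> Px Py; elim: l => [|z l IHl] //=.
case Pz: (P z) => /=; first by case: (z == x); case: (z == y); rewrite //= ltnS.
have [/negbTE-> /negbTE->] : z != x /\ z != y.
  by split; apply: contraFneq Pz => ->.
by rewrite ltnS.
Qed.

Lemma ohead_mem (T : eqType) (s : seq T) (x : T) : ohead s = Some x -> x \in s.
Proof. by case: s => //= y s [->]; rewrite mem_head. Qed.

Lemma ohead_filter_index_le (T : eqType) (P : pred T) (l : seq T) (x : T) :
  x \in l -> P x -> exists2 y, ohead (filter P l) = Some y & index y l <= index x l.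
Proof.
elim: l => [|z l IHl] //= xzl Px; case Pz: (P z); first by exists z; rewrite //= eqxx.
have xl : x \in l by move: xzl; rewrite inE => /predU1P[xz|//]; rewrite -xz Px in Pz.
have [y yhead le_yx] := IHl xl Px; exists y => //.
have /negbTE-> : z != y.
  by apply: contraFneq Pz => ->; have := ohead_mem yhead; rewrite mem_filter => /andP[].
by have /negbTE-> : z != x by apply: contraFneq Pz => ->.
Qed.

Lemma index_inj_mem (T : eqType) (l : seq T) (x y : T) :
  x \in l -> index x l = index y l -> x = y.
Proof.
move=> xl eq_xy; have yl : y \in l by rewrite -index_mem -eq_xy index_mem.
by rewrite -(nth_index x xl) eq_xy nth_index.
Qed.

Section Assignments.
Variables (Appl School Subj : finType) (J : TAP Appl School Subj).
Implicit Types (M N : assignment_t Appl School) (a b : Appl) (s t : School) (p : Subj).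

Definition improves M a s : bool :=
  if M a is Some t then aprefers J a s t else true.

Definition free_for M a s : bool :=
  undersub J M s (sub1 J a) && undersub J M s (sub2 J a).

Definition free_schools M a : seq School := [seq s <- apl J a | free_for M a s].

Lemma sd_stepE M a :
  sd_step J M a =
  if ohead (free_schools M a) is Some s then [ffun b => if b == a then Some s else M b]
  else M.
Proof. by []. Qed.

Lemma has_subj1 a : has_subj J a (sub1 J a).
Proof. by rewrite /has_subj eqxx. Qed.

Lemma has_subj2 a : has_subj J a (sub2 J a).
Proof. by rewrite /has_subj eqxx orbT. Qed.

Lemma free_for_undersub M a s p : free_for M a s -> has_subj J a p -> undersub J M s p.
Proof. by rewrite /has_subj => /andP[u1 u2] /orP[]/eqP->. Qed.

Lemma type_set_eq a b :
  has_subj J b (sub1 J a) -> has_subj J b (sub2 J a) -> type_set J b = type_set J a.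
Proof.
rewrite /type_set /has_subj; move: (sub_neq J a) => neq_a.
case/orP=> /eqP e1 /orP[]/eqP e2; move: neq_a; rewrite e1 e2 ?eqxx // => _.
exact: setUC.
Qed.

Lemma Mp_subset M N s p :
  (forall b, M b = Some s -> N b = Some s) -> Mp J M s p \subset Mp J N s p.
Proof. by move=> MN; apply/subsetP => b; rewrite !inE => /andP[/eqP/MN-> ->]; rewrite eqxx. Qed.

Lemma undersub_of_newcomer M N a t p :
  is_matching J N -> Mp J M t p \subset Mp J N t p ->
  M a = None -> N a = Some t -> has_subj J a p -> undersub J M t p.
Proof.
move=> [_ Ncap] subMN Ma Na ap.
have sub_aM : a |: Mp J M t p \subset Mp J N t p.
  by rewrite subUset sub1set inE Na eqxx ap subMN.
have := leq_trans (subset_leq_card sub_aM) (Ncap t p).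
by rewrite cardsU1 inE Ma.
Qed.

Lemma not_blocks_full M a s p :
  has_subj J a p -> ~~ undersub J M s p ->
  (forall b, b \in Mp J M s p -> ~~ sprefers J s a b) -> ~~ blocks J M a s.
Proof.
move=> ap full no_pref.
have no_pref_p : [exists b in Mp J M s p, sprefers J s a b] = false.
  by apply/existsP => -[b /andP[/no_pref/negbTE->]].
have no_pref_type : [exists b in Mtype J M s a, sprefers J s a b] = false.
  apply/existsP => -[b /andP[]]; rewrite inE => /andP[Mb /eqP tb].
  have bp : has_subj J b p.
    by move: ap; rewrite /has_subj -!in_set2 -/(type_set J b) tb.
  by apply/negP/no_pref; rewrite inE Mb.
apply/negP => /and3P[_ _]; move: full => /negbTE full.
case/orP: ap no_pref_p => /eqP ap; subst p => no_pref_p;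
  rewrite full no_pref_p no_pref_type ?andbF /=.
- by case/existsP=> b1 /andP[/no_pref/negbTE nb1 /existsP[b2]]; rewrite nb1 !(andbF, andFb).
- by case/existsP=> b1 /andP[_ /existsP[b2 /andP[/no_pref/negbTE nb2]]]; rewrite nb2 !andbF.
Qed.

Lemma blocksI M a s :
  acceptable J a s -> improves M a s ->
  (forall p, has_subj J a p ->
     undersub J M s p || [exists b in Mp J M s p, sprefers J s a b]) ->
  blocks J M a s.
Proof.
move=> acc imp room; rewrite /blocks acc; move: imp; rewrite /improves => -> /=.
move: (room _ (has_subj1 a)) (room _ (has_subj2 a)).
case: (undersub J M s (sub1 J a)); case: (undersub J M s (sub2 J a)) => //=;
  [by move=> _ -> | by move=> -> |].
case/existsP=> b1 /andP[b1M b1p] /existsP[b2 /andP[b2M b2p]].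
have [e12|ne12] := eqVneq b1 b2.
  apply/orP; left; apply/existsP; exists b1; rewrite b1p andbT.
  move: b1M b2M; rewrite -e12 !inE => /andP[-> h1] /andP[_ h2].
  by rewrite (type_set_eq h1 h2) eqxx.
apply/orP; right; apply/existsP; exists b1; rewrite b1M.
by apply/existsP; exists b2; rewrite b2M ne12 b1p b2p.
Qed.

Lemma sd_step_other M a b : b != a -> sd_step J M a b = M b.
Proof. by move=> ba; rewrite sd_stepE; case: ohead => // s; rewrite ffunE (negbTE ba). Qed.

Lemma sd_step_self M a : M a = None -> sd_step J M a a = ohead (free_schools M a).
Proof. by move=> Ma; rewrite sd_stepE; case: ohead => [s|//]; rewrite ffunE eqxx. Qed.

Lemma sd_step_matching M a : is_matching J M -> is_matching J (sd_step J M a).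
Proof.
move=> [Macc Mcap]; rewrite sd_stepE.
case chosen: (ohead (free_schools M a)) => [s|]; last by split.
have := ohead_mem chosen; rewrite mem_filter => /andP[free_s acc_s].
split=> [b t|t p]; first by rewrite ffunE; case: eqP => [-> [<-] | _ /Macc].
set N := [ffun _ => _].
have [aN | aN] := boolP (a \in Mp J N t p).
  move: (aN); rewrite inE ffunE eqxx => /andP[/eqP[<-] ap].
  have sub_aM : Mp J N s p \subset a |: Mp J M s p.
    by apply/subsetP => b; rewrite !inE ffunE; case: (b =P a).
  apply: leq_trans (subset_leq_card sub_aM) _; rewrite cardsU1.
  exact: leq_trans (leq_add (leq_b1 _) (leqnn _)) (free_for_undersub free_s ap).
apply: leq_trans (Mcap t p); apply/subset_leq_card/subsetP => b bN.
have ba : b != a by apply: contraNneq aN => <-.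
by move: bN; rewrite !inE ffunE (negbTE ba).
Qed.

Lemma foldl_sd_step_notin l M b : b \notin l -> foldl (sd_step J) M l b = M b.
Proof.
elim: l M => [|x l IHl] M //=; rewrite inE negb_or => /andP[bx bl].
by rewrite IHl // sd_step_other.
Qed.

Lemma serial_dictatorship_notin l b : b \notin l -> serial_dictatorship J l b = None.
Proof. by move=> bl; rewrite /serial_dictatorship foldl_sd_step_notin ?ffunE. Qed.

Lemma serial_dictatorship_matching l : is_matching J (serial_dictatorship J l).
Proof.
rewrite /serial_dictatorship.
have : is_matching J [ffun _ => None].
  split=> [a s|s p]; first by rewrite ffunE.
  by apply: leq_trans (subset_leq_card (_ : _ \subset set0)) _;
    [apply/subsetP => b; rewrite !inE ffunE | rewrite cards0].
by elim: l [ffun _ => None] => //= a l IHl M /(sd_step_matching a); apply: IHl.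
Qed.

Section MasterList.
Variable ml : seq Appl.
Hypothesis uniq_ml : uniq ml.
Hypothesis spl_master : forall s, spl J s = [seq a <- ml | s \in apl J a].

Lemma sprefers_master s a b :
  s \in apl J a -> s \in apl J b -> sprefers J s a b = (index a ml < index b ml).
Proof. by move=> sa sb; rewrite /sprefers spl_master index_filter_lt. Qed.

Section Turn.
Variables (pre post : seq Appl) (a : Appl).
Hypothesis ml_split : ml = pre ++ a :: post.

Local Notation SD := (serial_dictatorship J ml).
Local Notation SDpre := (serial_dictatorship J pre).

Lemma notin_pre_post : a \notin pre /\ a \notin post.
Proof. by move: uniq_ml; rewrite ml_split cat_uniq /= => /and4P[_ /norP[]]. Qed.

Lemma index_pre_lt b : b \in pre -> index b ml < index a ml.
Proof.
have [a_pre _] := notin_pre_post.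
by move=> b_pre; rewrite ml_split !index_cat b_pre (negbTE a_pre) /= eqxx addn0 index_mem.
Qed.

Lemma index_post_gt b : b \notin pre -> b != a -> index a ml < index b ml.
Proof.
have [a_pre _] := notin_pre_post.
move=> b_pre ba; rewrite ml_split !index_cat (negbTE b_pre) (negbTE a_pre) /=.
by rewrite eqxx eq_sym (negbTE ba) addn0 addnS ltnS leq_addr.
Qed.

Lemma sd_turn_pre b : b \in pre -> SD b = SDpre b.
Proof.
have [a_pre a_post] := notin_pre_post.
move=> b_pre; rewrite ml_split /serial_dictatorship foldl_cat /= foldl_sd_step_notin.
  by rewrite sd_step_other //; apply: contraNneq a_pre => <-.
apply: contraL b_pre => b_post; move: uniq_ml; rewrite ml_split cat_uniq /=.
by case/and4P=> _ /norP[_ /hasPn/(_ b b_post)].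
Qed.

Lemma sd_pre_assigned b s : SDpre b = Some s -> b \in pre.
Proof. by move=> SDb; apply: contraT => b_pre; rewrite serial_dictatorship_notin in SDb. Qed.

Lemma sd_turn_self : SD a = ohead (free_schools SDpre a).
Proof.
have [a_pre a_post] := notin_pre_post.
rewrite ml_split /serial_dictatorship foldl_cat /= foldl_sd_step_notin //.
exact/sd_step_self/serial_dictatorship_notin.
Qed.

Lemma sd_not_blocks s : ~~ blocks J SD a s.
Proof.
apply/negP => blk; have /and3P[acc imp _] := blk.
have [free_s | not_free] := boolP (free_for SDpre a s).
  have [t chosen le_ts] := ohead_filter_index_le acc free_s.
  by move: imp; rewrite sd_turn_self chosen /aprefers ltnNge le_ts.
have [p ap full] : exists2 p, has_subj J a p & ~~ undersub J SDpre s p.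
  by move: not_free; rewrite negb_and => /orP[]; [exists (sub1 J a) | exists (sub2 J a)];
    rewrite ?has_subj1 ?has_subj2.
have [_ SDcap] := serial_dictatorship_matching ml.
have same_roster : Mp J SD s p = Mp J SDpre s p.
  have sub : Mp J SDpre s p \subset Mp J SD s p.
    by apply: Mp_subset => b pre_b; rewrite sd_turn_pre ?(sd_pre_assigned pre_b).
  apply/esym/eqP; rewrite eqEcard sub /=.
  by apply: leq_trans (SDcap s p) _; rewrite leqNgt.
apply/negP: blk; apply: (not_blocks_full ap); first by rewrite /undersub same_roster.
move=> b; rewrite same_roster inE => /andP[/eqP SDb _].
rewrite sprefers_master //; last exact: (serial_dictatorship_matching pre).1 b s SDb.
by rewrite -leqNgt ltnW // index_pre_lt // (sd_pre_assigned SDb).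
Qed.

Lemma stable_agrees_turn M :
  stable J M -> {in pre, forall b, M b = SD b} -> M a = SD a.
Proof.
move=> [Mmatch Mstable] agree; have [Macc _] := Mmatch.
have SDpre_M b t : SDpre b = Some t -> M b = Some t.
  by move=> SDb; rewrite agree ?sd_turn_pre ?(sd_pre_assigned SDb).
have SDpre_a : SDpre a = None by apply/serial_dictatorship_notin; case: notin_pre_post.
have free_M t : M a = Some t -> free_for SDpre a t.
  move=> Ma; have sub p : Mp J SDpre t p \subset Mp J M t p by apply: Mp_subset => b; apply: SDpre_M.
  by apply/andP; split; apply: (undersub_of_newcomer Mmatch (sub _) SDpre_a Ma);
    rewrite ?has_subj1 ?has_subj2.
have no_improve s : s \in apl J a -> free_for SDpre a s -> M a != Some s -> ~~ improves M a s.
  move=> acc free_s Ma_s; apply: contra (Mstable a s) => imp.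
  apply: blocksI => // p ap; have [//|full] := boolP (undersub J M s p).
  have [b bM b_new] : exists2 b, b \in Mp J M s p & b \notin Mp J SDpre s p.
    apply/subsetPn; apply: contra full => sub.
    exact: leq_ltn_trans (subset_leq_card sub) (free_for_undersub free_s ap).
  move: (bM); rewrite inE => /andP[/eqP Mb bp].
  have b_pre : b \notin pre.
    by apply: contra b_new => b_pre; rewrite inE -(sd_turn_pre b_pre) -(agree b b_pre) Mb eqxx.
  have ba : b != a by apply: contraNneq Ma_s => <-; rewrite Mb.
  apply/existsP; exists b; rewrite bM sprefers_master ?index_post_gt //.
  exact: Macc Mb.
rewrite sd_turn_self; case Ma: (M a) => [t|].
  have acc_t : t \in apl J a by apply: Macc Ma.
  have [y chosen le_yt] := ohead_filter_index_le acc_t (free_M _ Ma).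
  rewrite chosen; have [->//|ty] := eqVneq t y.
  have := ohead_mem chosen; rewrite mem_filter => /andP[free_y acc_y].
  have Ma_y : M a != Some y by rewrite Ma; apply: contra ty => /eqP[->].
  have := no_improve y acc_y free_y Ma_y; rewrite /improves Ma /aprefers.
  rewrite ltn_neqAle le_yt andbT negbK => /eqP/(index_inj_mem acc_y) yt.
  by rewrite yt eqxx in ty.
case chosen: (ohead _) => [y|//].
have := ohead_mem chosen; rewrite mem_filter => /andP[free_y acc_y].
by have := no_improve y acc_y free_y; rewrite /improves Ma => /(_ isT).
Qed.

End Turn.

Hypothesis ml_all : forall a, a \in ml.

Lemma serial_dictatorship_stable : stable J (serial_dictatorship J ml).
Proof.
split=> [|a s]; first exact: serial_dictatorship_matching.
have [pre [post ml_split]] : exists pre post, ml = pre ++ a :: post.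
  by case/splitPr: (ml_all a) => pre post; exists pre, post.
exact: sd_not_blocks ml_split s.
Qed.

Lemma stable_eq_serial_dictatorship M : stable J M -> M = serial_dictatorship J ml.
Proof.
move=> stM; suff agree pre post : ml = pre ++ post ->
    {in pre, forall b, M b = serial_dictatorship J ml b}.
  by apply/ffunP => b; apply: (agree ml [::]); rewrite ?cats0 ?ml_all.
elim/last_ind: pre post => [//|pre a IHpre] post ml_split b.
rewrite -cats1 -catA cat1s in ml_split.
rewrite mem_rcons inE => /predU1P[->|]; last exact: IHpre ml_split b.
exact: stable_agrees_turn ml_split M stM (IHpre _ ml_split).
Qed.

End MasterList.
End Assignments.

Theorem theorem2 (Appl School Subj : finType) (J : TAP Appl School Subj)
    (ml : seq Appl) :
  uniq ml -> (forall a, a \in ml) ->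
  (forall s, spl J s = [seq a <- ml | s \in apl J a]) ->
  stable J (serial_dictatorship J ml) /\
  (forall M, stable J M -> M = serial_dictatorship J ml).
Proof.
move=> uniq_ml ml_all spl_master.
split; [exact: serial_dictatorship_stable | exact: stable_eq_serial_dictatorship].
Qed.
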